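(* Let $a>0$ and let $\theta_0,\theta_1,\theta_2\in\mathbb{R}$ be distinct. In the $(t,x)$-plane consider the points $P_i=\left(\theta_i,\tfrac12 a\theta_i^2\right)$, $i=0,1,2$, on the parabola $x=\tfrac12 at^2$. For $c>0$ equip the plane with the Minkowski inner product $u\cdot v=-c^2u_tv_t+u_xv_x$ associated to the metric $ds^2=-c^2dt^2+dx^2$. Then for all sufficiently large $c$ the chords $P_0P_1$ and $P_0P_2$ are timelike, and their pseudo-angle $\theta(c)\ge0$, defined by $\cosh^2(\theta(c))=\frac{(u\cdot v)^2}{(u\cdot u)(v\cdot v)}$ with $u=P_1-P_0$, $v=P_2-P_0$, satisfies $\cosh^2(\theta(c))\to1$ and $$\theta(c)^2\sim\frac{a^2}{4c^2}(\theta_1-\theta_2)^2\quad\text{as } c\to\infty,$$ an asymptotic which does not depend on $\theta_0$.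
   Context: A vector $u$ is timelike if $u\cdot u<0$. This parabola is the $c\to\infty$ limit of the hyperbolae $x=\frac{c^2}{a}(\cosh(a\theta/c)-1)$, $t=\frac{c}{a}\sinh(a\theta/c)$ (worldlines of constant proper acceleration $a$). *)

From Stdlib Require Import Reals.
From Coquelicot Require Import Coquelicot.
Open Scope R_scope.

Definition pt (a th : R) : R * R := (th, a * th ^ 2 / 2).

Definition vsub (p q : R * R) : R * R := (fst p - fst q, snd p - snd q).

Definition mdot (c : R) (u v : R * R) : R :=
  - c ^ 2 * fst u * fst v + snd u * snd v.

Definition timelike (c : R) (u : R * R) : Prop := mdot c u u < 0.

Definition cosh2_ratio (c : R) (u v : R * R) : R :=
  (mdot c u v) ^ 2 / (mdot c u u * mdot c v v).

(* Both chords have the form s (1, w) where w = a (θ_i + θ_0) / 2 is the mean velocity along the chord,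
   so everything reduces to the algebra of the two velocities p and q: for c > |p|, |q| the chords are
   timelike and cosh²θ = 1 + E(c) with E(c) = c² (p - q)² / ((c² - p²)(c² - q²)) = (p - q)²/c² + O(c⁻⁴).
   Since sinh²θ = E(c), the bounds θ ≤ sinh θ ≤ θ cosh θ give E/(1 + E) ≤ θ² ≤ E, hence θ² ~ (p - q)²/c². *)
From Stdlib Require Import Reals Lra.
From Coquelicot Require Import Coquelicot.
Open Scope R_scope.

Lemma cosh_sqr_sinh y : cosh y ^ 2 = 1 + sinh y ^ 2.
Proof.
  unfold cosh, sinh.
  assert (Hexp : exp y * exp (- y) = 1).
  { rewrite <- exp_plus, Rplus_opp_r. apply exp_0. }
  field_simplify. nra.
Qed.

Lemma cosh_ge_1 y : 1 <= cosh y.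
Proof.
  assert (0 < cosh y) by (unfold cosh; pose proof (exp_pos y); pose proof (exp_pos (- y)); lra).
  pose proof (cosh_sqr_sinh y). nra.
Qed.

Lemma sinh_ge_0 y : 0 <= y -> 0 <= sinh y.
Proof.
  intros Hy. destruct (Req_dec y 0) as [->|Hy0].
  - rewrite sinh_0. lra.
  - left. rewrite <- sinh_0. apply sinh_lt. lra.
Qed.

Lemma sinh_ge_id y : 0 <= y -> y <= sinh y.
Proof.
  intros Hy. destruct (Req_dec y 0) as [->|Hy0].
  - rewrite sinh_0. lra.
  - destruct (MVT_cor2 (fun x => sinh x - x) (fun x => cosh x - 1) 0 y) as [z [Hz _]].
    + lra.
    + intros z _. apply (derivable_pt_lim_minus sinh id).
      * apply derivable_pt_lim_sinh.
      * apply derivable_pt_lim_id.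
    + rewrite sinh_0 in Hz. pose proof (cosh_ge_1 z). nra.
Qed.

Lemma sinh_le_mul_cosh y : 0 <= y -> sinh y <= y * cosh y.
Proof.
  intros Hy. destruct (Req_dec y 0) as [->|Hy0].
  - rewrite sinh_0. lra.
  - destruct (MVT_cor2 (fun x => x * cosh x - sinh x) (fun x => x * sinh x) 0 y)
      as [z [Hz Hz_range]].
    + lra.
    + intros z _.
      replace (z * sinh z) with ((1 * cosh z + z * sinh z) - cosh z) by ring.
      apply (derivable_pt_lim_minus (id * cosh)%F sinh).
      * apply (derivable_pt_lim_mult id cosh).
        -- apply derivable_pt_lim_id.
        -- apply derivable_pt_lim_cosh.
      * apply derivable_pt_lim_sinh.
    + rewrite sinh_0, cosh_0 in Hz.
      assert (0 <= z * sinh z) by (apply Rmult_le_pos; [|apply sinh_ge_0]; lra).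
      nra.
Qed.

Lemma sqr_bounds_of_cosh_sqr t e :
  0 <= t -> cosh t ^ 2 = 1 + e -> e / (1 + e) <= t ^ 2 <= e.
Proof.
  intros Ht Hcosh.
  rewrite cosh_sqr_sinh in Hcosh.
  assert (Hsinh : sinh t ^ 2 = e) by lra.
  pose proof (sinh_ge_id t Ht). pose proof (sinh_le_mul_cosh t Ht).
  assert (He : 0 <= e) by nra.
  assert (Hup : sinh t ^ 2 <= t ^ 2 * cosh t ^ 2) by nra.
  rewrite cosh_sqr_sinh, Hsinh in Hup.
  split.
  - apply (Rmult_le_reg_r (1 + e)); [lra|].
    unfold Rdiv. rewrite Rmult_assoc, Rinv_l, Rmult_1_r by lra. lra.
  - nra.
Qed.

Lemma is_lim_p_infty_continuous_inv (f h : R -> R) (l : R) :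
  continuous h 0 -> h 0 = l ->
  (exists M, forall c, M < c -> f c = h (/ c)) ->
  is_lim f p_infty l.
Proof.
  intros Hh <- [M HM].
  apply is_lim_ext_loc with (fun c => h (/ c)).
  - exists M. intros c Hc. symmetry. apply HM, Hc.
  - apply is_lim_comp_continuous with (f := fun c => / c); [|exact Hh].
    apply (is_lim_inv (fun c => c) p_infty p_infty); [apply is_lim_id|discriminate].
Qed.

Lemma chord_pt a t1 t0 :
  vsub (pt a t1) (pt a t0) = (t1 - t0, (t1 - t0) * (a * (t1 + t0) / 2)).
Proof. unfold vsub, pt; simpl. f_equal; field. Qed.

Lemma mdot_scaled c s p r q :
  mdot c (s, s * p) (r, r * q) = s * r * (p * q - c ^ 2).
Proof. unfold mdot; simpl. ring. Qed.

Lemma timelike_scaled c s p : s <> 0 -> p ^ 2 < c ^ 2 -> timelike c (s, s * p).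
Proof.
  intros Hs Hp. unfold timelike. rewrite mdot_scaled.
  assert (0 < s * s) by nra. nra.
Qed.

Section Velocities.

Variables p q : R.

Definition cosh2_excess (c : R) : R :=
  c ^ 2 * (p - q) ^ 2 / ((c ^ 2 - p ^ 2) * (c ^ 2 - q ^ 2)).

Lemma cosh2_ratio_scaled c s r :
  s <> 0 -> r <> 0 -> p ^ 2 < c ^ 2 -> q ^ 2 < c ^ 2 ->
  cosh2_ratio c (s, s * p) (r, r * q) = 1 + cosh2_excess c.
Proof.
  intros Hs Hr Hp Hq. unfold cosh2_ratio, cosh2_excess. rewrite !mdot_scaled.
  field. repeat split; lra.
Qed.

Lemma cosh2_excess_pos c :
  p <> q -> p ^ 2 < c ^ 2 -> q ^ 2 < c ^ 2 -> 0 < cosh2_excess c.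
Proof.
  intros Hpq Hp Hq. unfold cosh2_excess.
  assert (0 < (p - q) ^ 2) by (apply pow2_gt_0; lra).
  assert (0 < c ^ 2) by nra.
  apply Rdiv_lt_0_compat; apply Rmult_lt_0_compat; lra.
Qed.

Definition velocities_bound : R := Rabs p + Rabs q + 1.

Lemma velocities_lt c :
  velocities_bound < c -> p ^ 2 < c ^ 2 /\ q ^ 2 < c ^ 2 /\ 0 < c.
Proof.
  unfold velocities_bound, Rabs.
  destruct (Rcase_abs p), (Rcase_abs q); intros Hc; repeat split; nra.
Qed.

(* In the variable w = 1/c, c² E(c) is the function below, which is smooth at w = 0. *)
Let scaled_excess (w : R) : R := (p - q) ^ 2 / ((1 - p ^ 2 * w ^ 2) * (1 - q ^ 2 * w ^ 2)).

Lemma scaled_excess_inv c :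
  velocities_bound < c -> c ^ 2 * cosh2_excess c = scaled_excess (/ c).
Proof.
  intros Hc. destruct (velocities_lt c Hc) as [Hp [Hq Hc0]].
  unfold scaled_excess, cosh2_excess. field. repeat split; nra.
Qed.

Ltac continuity_at_0 :=
  apply (@ex_derive_continuous R_AbsRing R_NormedModule); unfold scaled_excess;
  auto_derive; repeat split; intros H; ring_simplify in H; lra.

Lemma is_lim_cosh2_excess : is_lim cosh2_excess p_infty 0.
Proof.
  apply (is_lim_p_infty_continuous_inv _ (fun w => w ^ 2 * scaled_excess w));
    [continuity_at_0|simpl; ring|].
  exists velocities_bound. intros c Hc.
  destruct (velocities_lt c Hc) as [_ [_ Hc0]].
  rewrite <- scaled_excess_inv by exact Hc. field. lra.
Qed.

Lemma is_lim_scaled_cosh2_excess :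
  is_lim (fun c => c ^ 2 * cosh2_excess c) p_infty ((p - q) ^ 2).
Proof.
  apply (is_lim_p_infty_continuous_inv _ scaled_excess);
    [continuity_at_0|unfold scaled_excess; field|].
  exists velocities_bound. intros c Hc. apply scaled_excess_inv, Hc.
Qed.

Lemma is_lim_scaled_cosh2_excess_damped :
  is_lim (fun c => c ^ 2 * cosh2_excess c / (1 + cosh2_excess c)) p_infty ((p - q) ^ 2).
Proof.
  apply (is_lim_p_infty_continuous_inv _
           (fun w => scaled_excess w / (1 + w ^ 2 * scaled_excess w)));
    [continuity_at_0|unfold scaled_excess; field|].
  exists velocities_bound. intros c Hc.
  destruct (velocities_lt c Hc) as [_ [_ Hc0]].
  rewrite <- scaled_excess_inv by exact Hc.
  replace ((/ c) ^ 2 * (c ^ 2 * cosh2_excess c)) with (cosh2_excess c) by (field; lra).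
  reflexivity.
Qed.

Lemma is_lim_sqr_angle (theta : R -> R) :
  p <> q ->
  (exists C, forall c, C < c -> 0 <= theta c /\ cosh (theta c) ^ 2 = 1 + cosh2_excess c) ->
  is_lim (fun c => theta c ^ 2 / ((p - q) ^ 2 / c ^ 2)) p_infty 1.
Proof.
  intros Hpq [C HC].
  assert (HK : 0 < (p - q) ^ 2) by (apply pow2_gt_0; lra).
  assert (Hdiv_sqr_gap : forall f, is_lim f p_infty ((p - q) ^ 2) ->
                            is_lim (fun c => f c / (p - q) ^ 2) p_infty 1).
  { intros f Hf.
    replace (Finite 1) with (Rbar_div ((p - q) ^ 2) ((p - q) ^ 2))
      by (simpl; f_equal; field; lra).
    apply is_lim_div; [exact Hf|apply is_lim_const| |exact I].
    simpl. intros H. injection H. lra. }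
  apply (is_lim_le_le_loc
           (fun c => c ^ 2 * cosh2_excess c / (1 + cosh2_excess c) / (p - q) ^ 2)
           (fun c => c ^ 2 * cosh2_excess c / (p - q) ^ 2)).
  - exists (Rmax C velocities_bound). intros c Hc.
    destruct (HC c (Rle_lt_trans _ _ _ (Rmax_l _ _) Hc)) as [Ht Hcosh].
    destruct (velocities_lt c (Rle_lt_trans _ _ _ (Rmax_r _ _) Hc)) as [Hp [Hq Hc0]].
    pose proof (cosh2_excess_pos c Hpq Hp Hq).
    destruct (sqr_bounds_of_cosh_sqr _ _ Ht Hcosh) as [Hlo Hhi].
    assert (0 < c ^ 2) by nra.
    assert (Hscale : 0 <= c ^ 2 / (p - q) ^ 2) by (apply Rlt_le, Rdiv_lt_0_compat; lra).
    replace (theta c ^ 2 / ((p - q) ^ 2 / c ^ 2)) with (c ^ 2 / (p - q) ^ 2 * theta c ^ 2)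
      by (field; lra).
    replace (c ^ 2 * cosh2_excess c / (1 + cosh2_excess c) / (p - q) ^ 2)
      with (c ^ 2 / (p - q) ^ 2 * (cosh2_excess c / (1 + cosh2_excess c))) by (field; lra).
    replace (c ^ 2 * cosh2_excess c / (p - q) ^ 2)
      with (c ^ 2 / (p - q) ^ 2 * cosh2_excess c) by (field; lra).
    split; apply Rmult_le_compat_l; assumption.
  - apply Hdiv_sqr_gap, is_lim_scaled_cosh2_excess_damped.
  - apply Hdiv_sqr_gap, is_lim_scaled_cosh2_excess.
Qed.

End Velocities.

Theorem mainTheorem4 (a th0 th1 th2 : R) (ha : 0 < a)
  (h01 : th0 <> th1) (h02 : th0 <> th2) (h12 : th1 <> th2) :
  let u := vsub (pt a th1) (pt a th0) in
  let v := vsub (pt a th2) (pt a th0) in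
  (exists C : R, forall c : R, C < c ->
     timelike c u /\ timelike c v /\ 1 <= cosh2_ratio c u v)
  /\ is_lim (fun c => cosh2_ratio c u v) p_infty 1
  /\ (forall theta : R -> R,
        (exists C : R, forall c : R, C < c ->
           0 <= theta c /\ (cosh (theta c)) ^ 2 = cosh2_ratio c u v) ->
        is_lim (fun c => theta c ^ 2 / (a ^ 2 / (4 * c ^ 2) * (th1 - th2) ^ 2))
          p_infty 1).
Proof.
  intros u v.
  set (p := a * (th1 + th0) / 2). set (q := a * (th2 + th0) / 2).
  assert (Hpq : p <> q).
  { unfold p, q. intros H. apply h12, (Rmult_eq_reg_l (a / 2)); [lra|]. lra. }
  assert (Hu : u = (th1 - th0, (th1 - th0) * p)) by apply chord_pt.
  assert (Hv : v = (th2 - th0, (th2 - th0) * q)) by apply chord_pt.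
  assert (Hratio : forall c, velocities_bound p q < c ->
                     cosh2_ratio c u v = 1 + cosh2_excess p q c).
  { intros c Hc. destruct (velocities_lt p q c Hc) as [Hp [Hq _]].
    rewrite Hu, Hv. apply cosh2_ratio_scaled; auto; lra. }
  split; [|split].
  - exists (velocities_bound p q). intros c Hc.
    destruct (velocities_lt p q c Hc) as [Hp [Hq _]].
    rewrite Hratio by exact Hc. pose proof (cosh2_excess_pos p q c Hpq Hp Hq).
    rewrite Hu, Hv. repeat split; try apply timelike_scaled; auto; lra.
  - apply is_lim_ext_loc with (fun c => 1 + cosh2_excess p q c).
    + exists (velocities_bound p q). intros c Hc. symmetry. apply Hratio, Hc.
    + replace (Finite 1) with (Finite (1 + 0)) by (f_equal; ring).
      apply is_lim_plus'; [apply is_lim_const|apply is_lim_cosh2_excess].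
  - intros theta [C HC].
    apply is_lim_ext_loc with (fun c => theta c ^ 2 / ((p - q) ^ 2 / c ^ 2)).
    + exists 0. intros c Hc. unfold p, q. f_equal. field. lra.
    + apply is_lim_sqr_angle; [exact Hpq|].
      exists (Rmax C (velocities_bound p q)). intros c Hc.
      rewrite <- Hratio by exact (Rle_lt_trans _ _ _ (Rmax_r _ _) Hc).
      apply HC, (Rle_lt_trans _ _ _ (Rmax_l _ _) Hc).
Qed.
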